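(* Let $c=\min_{x\in\partial D}\phi(x;p,p')$, assume $0<\eta'<\inf_{\omega\in S^2}s(\omega;p,p',c)$, and fix $0<s<\eta'$. For $\omega\in S^2$: (i) if $p'+s(\omega;p,p',c)\omega\in\partial D$, then $\min_{x\in\partial D}\phi(x;p,p'+s\omega)=c-s$; (ii) if $p'+s(\omega;p,p',c)\omega\notin\partial D$, then $\min_{x\in\partial D}\phi(x;p,p'+s\omega)>c-s$. Consequently $$\Lambda_{\partial D}(p,p')=\{p'+s(\omega;p,p',c)\omega:\ \omega\in S^2,\ \min_{x\in\partial D}\phi(x;p,p'+s\omega)=c-s\}.$$
   Context: Let $D\subset\mathbb R^3$ be a nonempty bounded open set with $C^2$ boundary; $p,p'\in\mathbb R^3\setminus\overline D$ with $[p,p']\cap\overline D=\emptyset$ (so $c>|p-p'|$); $B'$ is the open ball with center $p'$ and radius $\eta'$, $\overline{B'}\cap\overline D=\emptyset$. $\phi(x;y,y')=|y-x|+|x-y'|$; $E_c(p,p')=\{x:\phi(x;p,p')=c\}$; $\Lambda_{\partial D}(p,p')=\{q\in\partial D:\phi(q;p,p')=c\}$. For $\omega\in S^2$, $s(\omega;p,p',c)=\dfrac{c^2-|p-p'|^2}{2\{c-\omega\cdot(p-p')\}}$, so that $p'+s(\omega;p,p',c)\omega$ is the unique point of $E_c(p,p')$ on the ray $\{p'+t\omega:t>0\}$. *)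

From Stdlib Require Import Reals Lra.
Open Scope R_scope.

Record V3 := mkV3 { v1 : R; v2 : R; v3 : R }.

Definition vadd (x y : V3) : V3 := mkV3 (v1 x + v1 y) (v2 x + v2 y) (v3 x + v3 y).
Definition vsub (x y : V3) : V3 := mkV3 (v1 x - v1 y) (v2 x - v2 y) (v3 x - v3 y).
Definition vscale (a : R) (x : V3) : V3 := mkV3 (a * v1 x) (a * v2 x) (a * v3 x).
Definition dot (x y : V3) : R := v1 x * v1 y + v2 x * v2 y + v3 x * v3 y.
Definition norm (x : V3) : R := sqrt (dot x x).
Definition dist3 (x y : V3) : R := norm (vsub x y).
Definition vzero : V3 := mkV3 0 0 0.

Definition in_S2 (w : V3) : Prop := norm w = 1.

Definition is_open (D : V3 -> Prop) : Prop :=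
  forall x, D x -> exists r, 0 < r /\ forall y, dist3 y x < r -> D y.
Definition is_bounded (D : V3 -> Prop) : Prop :=
  exists M, forall x, D x -> norm x <= M.
Definition closure (D : V3 -> Prop) (x : V3) : Prop :=
  forall eps, 0 < eps -> exists y, D y /\ dist3 y x < eps.
Definition interior (D : V3 -> Prop) (x : V3) : Prop :=
  exists r, 0 < r /\ forall y, dist3 y x < r -> D y.
Definition boundary (D : V3 -> Prop) (x : V3) : Prop :=
  closure D x /\ ~ interior D x.

Definition basis (i : nat) : V3 :=
  match i with 0%nat => mkV3 1 0 0 | 1%nat => mkV3 0 1 0 | _ => mkV3 0 0 1 end.
Definition is_partial (f : V3 -> R) (i : nat) (g : V3 -> R) : Prop :=
  forall x, derivable_pt_lim (fun t => f (vadd x (vscale t (basis i)))) 0 (g x).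
Definition continuous3 (f : V3 -> R) : Prop :=
  forall x eps, 0 < eps -> exists delta, 0 < delta /\
    forall y, dist3 y x < delta -> Rabs (f y - f x) < eps.
Definition C1 (f : V3 -> R) : Prop :=
  continuous3 f /\
  exists g1 g2 g3, is_partial f 0 g1 /\ is_partial f 1 g2 /\ is_partial f 2 g3 /\
    continuous3 g1 /\ continuous3 g2 /\ continuous3 g3.
Definition C2 (f : V3 -> R) : Prop :=
  continuous3 f /\
  exists g1 g2 g3, is_partial f 0 g1 /\ is_partial f 1 g2 /\ is_partial f 2 g3 /\
    C1 g1 /\ C1 g2 /\ C1 g3.

Definition C2_boundary (D : V3 -> Prop) : Prop :=
  forall q, boundary D q ->
    exists r rho g1 g2 g3, 0 < r /\ C2 rho /\
      is_partial rho 0 g1 /\ is_partial rho 1 g2 /\ is_partial rho 2 g3 /\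
      mkV3 (g1 q) (g2 q) (g3 q) <> vzero /\
      forall x, dist3 x q < r -> (D x <-> rho x < 0).

Definition phi (x y y' : V3) : R := norm (vsub y x) + norm (vsub x y').

Definition sfun (w p p' : V3) (c : R) : R :=
  (c ^ 2 - (norm (vsub p p')) ^ 2) / (2 * (c - dot w (vsub p p'))).

Definition is_min_on (S : V3 -> Prop) (f : V3 -> R) (m : R) : Prop :=
  (exists x, S x /\ f x = m) /\ (forall x, S x -> m <= f x).

Definition is_inf_on (S : V3 -> Prop) (f : V3 -> R) (m : R) : Prop :=
  (forall x, S x -> m <= f x) /\
  (forall m', (forall x, S x -> m' <= f x) -> m' <= m).

Definition Lambda (D : V3 -> Prop) (p p' : V3) (c : R) (q : V3) : Prop :=
  boundary D q /\ phi q p p' = c.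

(** Write [d = p - p'] and, for a unit vector [w], let [q_w = p' + s(w) w] be the
  point of [E_c(p,p') = {x | phi(x;p,p') = c}] on the ray from [p'] in direction
  [w].  Everything follows from three elementary facts about [phi]:
  - moving the focus [p'] by [s] along [w] lowers [phi] by at most [s]
    (triangle inequality);
  - on the ray the bound is attained: [phi(q_w; p, p'+s w) = c - s];
  - equality case: if [phi(x;p,p') >= c] and [phi(x;p,p'+s w) <= c - s] with
    [s > 0], then [x - p'] is a nonnegative multiple of [w] and [x] lies on
    [E_c(p,p')], hence [x = q_w].
  Since [c] minimises [phi(.;p,p')] over the boundary, the first two facts give
  (i).  For (ii) the boundary is compact, so [phi(.;p,p'+s w)] attains a minimum
  [m] on it, and [m = c - s] would force [q_w] onto the boundary by the
  equality case.  Part (iii) combines the equality case with (i). *)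

From Stdlib Require Import Reals Lra Classical ClassicalEpsilon List.
From Coquelicot Require Compactness.
Open Scope R_scope.

Lemma V3_ext (x y : V3) : v1 x = v1 y -> v2 x = v2 y -> v3 x = v3 y -> x = y.
Proof. destruct x, y; simpl; intros; subst; reflexivity. Qed.

Ltac v3_ring := apply V3_ext; simpl; ring.

Lemma dot_self_nonneg (x : V3) : 0 <= dot x x.
Proof. unfold dot; nra. Qed.

Lemma dot_comm (x y : V3) : dot x y = dot y x.
Proof. unfold dot; ring. Qed.

Lemma dot_self_zero (x : V3) : dot x x = 0 -> x = vzero.
Proof.
  unfold dot; intro H.
  assert (v1 x = 0) by nra; assert (v2 x = 0) by nra; assert (v3 x = 0) by nra.
  apply V3_ext; simpl; assumption.
Qed.

Lemma dot_sub_scale (u w : V3) (a : R) :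
  dot (vsub u (vscale a w)) (vsub u (vscale a w)) =
  dot u u - 2 * a * dot u w + a * a * dot w w.
Proof. unfold dot; simpl; ring. Qed.

Lemma norm_nonneg (x : V3) : 0 <= norm x.
Proof. apply sqrt_pos. Qed.

Lemma norm_sq (x : V3) : norm x * norm x = dot x x.
Proof. apply sqrt_sqrt, dot_self_nonneg. Qed.

Lemma norm_unique (x : V3) (r : R) : 0 <= r -> dot x x = r * r -> norm x = r.
Proof. intros Hr E; unfold norm; rewrite E; apply sqrt_square; exact Hr. Qed.

(** Lagrange's identity makes [(x.y)^2 <= |x|^2 |y|^2] a sum of squares. *)
Lemma dot_sq_le (x y : V3) : dot x y * dot x y <= dot x x * dot y y.
Proof.
  unfold dot.
  pose proof (Rle_0_sqr (v1 x * v2 y - v2 x * v1 y)).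
  pose proof (Rle_0_sqr (v1 x * v3 y - v3 x * v1 y)).
  pose proof (Rle_0_sqr (v2 x * v3 y - v3 x * v2 y)).
  unfold Rsqr in *; nra.
Qed.

Lemma le_of_sq_le (a b : R) : 0 <= b -> a * a <= b * b -> a <= b.
Proof. intros; nra. Qed.

Lemma cauchy_schwarz (x y : V3) : dot x y <= norm x * norm y.
Proof.
  pose proof (dot_sq_le x y); pose proof (norm_sq x); pose proof (norm_sq y).
  pose proof (norm_nonneg x); pose proof (norm_nonneg y).
  apply le_of_sq_le; [nra|].
  replace (norm x * norm y * (norm x * norm y)) with (dot x x * dot y y) by nra.
  assumption.
Qed.

Lemma norm_triangle (x y : V3) : norm (vadd x y) <= norm x + norm y.
Proof.
  pose proof (cauchy_schwarz x y); pose proof (norm_sq x); pose proof (norm_sq y).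
  pose proof (norm_sq (vadd x y)); pose proof (norm_nonneg (vadd x y)).
  pose proof (norm_nonneg x); pose proof (norm_nonneg y).
  assert (dot (vadd x y) (vadd x y) = dot x x + 2 * dot x y + dot y y)
    by (unfold dot; simpl; ring).
  nra.
Qed.

Lemma norm_sub_triangle (a b c : V3) :
  norm (vsub a c) <= norm (vsub a b) + norm (vsub b c).
Proof.
  replace (vsub a c) with (vadd (vsub a b) (vsub b c)) by v3_ring.
  apply norm_triangle.
Qed.

Lemma norm_sub_sym (a b : V3) : norm (vsub a b) = norm (vsub b a).
Proof. unfold norm; f_equal; unfold dot; simpl; ring. Qed.

Lemma dist3_triangle (x y z : V3) : dist3 x z <= dist3 x y + dist3 y z.
Proof. apply norm_sub_triangle. Qed.

Lemma dist3_sym (x y : V3) : dist3 x y = dist3 y x.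
Proof. apply norm_sub_sym. Qed.

Lemma norm_sub_lipschitz (a x y : V3) :
  Rabs (norm (vsub a x) - norm (vsub a y)) <= dist3 x y.
Proof.
  pose proof (norm_sub_triangle a y x); pose proof (norm_sub_triangle a x y).
  unfold dist3; rewrite (norm_sub_sym y x) in *.
  apply Rabs_le; lra.
Qed.

Lemma coords_le_norm (x : V3) :
  -norm x <= v1 x <= norm x /\ -norm x <= v2 x <= norm x /\
  -norm x <= v3 x <= norm x.
Proof.
  pose proof (norm_sq x); pose proof (norm_nonneg x); unfold dot in *.
  repeat split; nra.
Qed.

Lemma unit_dot (w : V3) : in_S2 w -> dot w w = 1.
Proof. intro Hw; rewrite <- norm_sq, Hw; ring. Qed.

Lemma norm_sub_scale_unit_sq (u w : V3) (a : R) :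
  in_S2 w ->
  dot (vsub u (vscale a w)) (vsub u (vscale a w)) =
  norm u * norm u - 2 * a * dot w u + a * a.
Proof.
  intro Hw. rewrite dot_sub_scale, (unit_dot w Hw), (dot_comm u w), norm_sq; ring.
Qed.

Lemma norm_scale_unit (a : R) (w : V3) : in_S2 w -> 0 <= a -> norm (vscale a w) = a.
Proof.
  intros Hw Ha; apply norm_unique; [exact Ha|].
  pose proof (unit_dot w Hw) as Hww; unfold dot in *; simpl.
  transitivity (a * a * (v1 w * v1 w + v2 w * v2 w + v3 w * v3 w)); [ring|].
  rewrite Hww; ring.
Qed.

Lemma ray_decomposition (q p' : V3) :
  q <> p' -> exists w, in_S2 w /\ q = vadd p' (vscale (dist3 q p') w).
Proof.
  intro Hqp. set (t := dist3 q p').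
  assert (Ht : 0 < t).
  { destruct (Rle_lt_or_eq_dec 0 t (norm_nonneg _)) as [Ht|Ht]; [exact Ht|].
    exfalso; apply Hqp.
    assert (Hz : vsub q p' = vzero).
    { apply dot_self_zero; rewrite <- norm_sq; unfold t, dist3 in Ht; rewrite <- Ht; ring. }
    apply V3_ext; [ assert (E := f_equal v1 Hz) | assert (E := f_equal v2 Hz)
                  | assert (E := f_equal v3 Hz) ]; simpl in E; lra. }
  exists (vscale (/ t) (vsub q p')). split.
  - apply norm_unique; [lra|].
    transitivity (/ t * / t * dot (vsub q p') (vsub q p')); [unfold dot; simpl; ring|].
    rewrite <- norm_sq; fold (dist3 q p') t; field; lra.
  - apply V3_ext; simpl; field; lra.
Qed.

Lemma triangle_equality_unit (u w : V3) (s : R) :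
  in_S2 w -> 0 < s -> norm (vsub u (vscale s w)) + s <= norm u ->
  u = vscale (norm u) w.
Proof.
  intros Hw Hs Heq. pose proof (unit_dot w Hw) as Hww.
  pose proof (norm_sq u); pose proof (norm_nonneg u).
  pose proof (norm_sq (vsub u (vscale s w))); pose proof (norm_nonneg (vsub u (vscale s w))).
  pose proof (dot_sub_scale u w s).
  assert (Hcs : dot u w <= norm u) by (pose proof (cauchy_schwarz u w); rewrite Hw in *; lra).
  assert (Hdot : dot u w = norm u) by nra.
  assert (Hz : vsub u (vscale (norm u) w) = vzero).
  { apply dot_self_zero; rewrite dot_sub_scale, Hdot, Hww; nra. }
  apply V3_ext; [ assert (E := f_equal v1 Hz) | assert (E := f_equal v2 Hz)
                | assert (E := f_equal v3 Hz) ]; simpl in *; lra.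
Qed.

(** ** Minima of continuous functions on compact subsets of [V3] *)

Definition V3_of_tuple (t : Compactness.Tn 3 R) : V3 :=
  match t with (a, (b, (c, _))) => mkV3 a b c end.
Definition tuple_of_V3 (x : V3) : Compactness.Tn 3 R := (v1 x, (v2 x, (v3 x, tt))).

Lemma close_n_dist3 (r : R) (y : V3) (t : Compactness.Tn 3 R) :
  0 < r -> Compactness.close_n 3 (r / 2) (tuple_of_V3 y) t ->
  dist3 y (V3_of_tuple t) < r.
Proof.
  intros Hr. destruct t as [t1 [t2 [t3 []]]]. simpl. intros [H1 [H2 [H3 _]]].
  apply Rabs_def2 in H1; apply Rabs_def2 in H2; apply Rabs_def2 in H3.
  unfold dist3. set (u := vsub y (mkV3 t1 t2 t3)).
  pose proof (norm_sq u); pose proof (norm_nonneg u).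
  assert (dot u u < r * r) by (unfold u, dot; simpl; nra).
  nra.
Qed.

Lemma ball_finite_cover (M : R) (delta : V3 -> posreal) :
  exists l : list V3, forall y, norm y <= M -> exists t, In t l /\ dist3 y t < delta t.
Proof.
  assert (Hhalf : forall t, 0 < delta (V3_of_tuple t) / 2)
    by (intro t; pose proof (cond_pos (delta (V3_of_tuple t))); lra).
  apply NNPP; intro Hno.
  apply (Compactness.compactness_list 3 (-M, (-M, (-M, tt))) (M, (M, (M, tt)))
           (fun t => mkposreal _ (Hhalf t))).
  intros [l Hl]. apply Hno. exists (map V3_of_tuple l). intros y Hy.
  destruct (Hl (tuple_of_V3 y)) as [t [Hin [_ Hclose]]].
  - destruct (coords_le_norm y) as [C1 [C2 C3]]. simpl; repeat split; lra.
  - exists (V3_of_tuple t). split; [apply in_map; exact Hin|].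
    apply close_n_dist3; [apply cond_pos | exact Hclose].
Qed.

Lemma list_argmin {T : Type} (g : T -> R) (l : list T) :
  l <> nil -> exists t0, In t0 l /\ forall t, In t l -> g t0 <= g t.
Proof.
  induction l as [|a l IH]; intros Hl; [congruence|].
  destruct l as [|b l'].
  - exists a; split; [left; reflexivity|]. intros t [<-|[]]; lra.
  - destruct IH as [t0 [Hin Hmin]]; [discriminate|].
    destruct (Rle_dec (g a) (g t0)).
    + exists a; split; [left; reflexivity|].
      intros t [<-|Ht]; [lra | specialize (Hmin t Ht); lra].
    + exists t0; split; [right; exact Hin|].
      intros t [<-|Ht]; [lra | exact (Hmin t Ht)].
Qed.

Lemma improving_neighbourhood (K : V3 -> Prop) (f : V3 -> R) :
  (exists x, K x) -> (forall x, closure K x -> K x) -> continuous3 f ->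
  ~ (exists x, K x /\ forall y, K y -> f x <= f y) ->
  forall x, exists ry : posreal * V3,
    K (snd ry) /\ forall z, K z -> dist3 z x < fst ry -> f (snd ry) < f z.
Proof.
  intros [y0 Ky0] Hclosed Hcont Hno x. destruct (classic (K x)) as [Kx|nKx].
  - assert (Hbetter : exists y, K y /\ f y < f x).
    { apply NNPP; intro N; apply Hno; exists x; split; [exact Kx|].
      intros y Ky; apply Rnot_lt_le; intro; apply N; exists y; auto. }
    destruct Hbetter as [y [Ky Hy]].
    destruct (Hcont x ((f x - f y) / 2)) as [r [Hr Hball]]; [lra|].
    exists (mkposreal r Hr, y); simpl; split; [exact Ky|].
    intros z _ Hz; specialize (Hball z Hz); apply Rabs_def2 in Hball; lra.
  - assert (Hfar : exists r, 0 < r /\ forall z, K z -> ~ dist3 z x < r).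
    { apply NNPP; intro N; apply nKx, Hclosed; intros eps He.
      apply NNPP; intro N2; apply N; exists eps; split; [exact He|].
      intros z Kz Hz; apply N2; exists z; auto. }
    destruct Hfar as [r [Hr Hfar]].
    exists (mkposreal r Hr, y0); simpl; split; [exact Ky0|].
    intros z Kz Hz; exfalso; exact (Hfar z Kz Hz).
Qed.

Lemma continuous_attains_min (K : V3 -> Prop) (f : V3 -> R) :
  (exists x, K x) -> is_bounded K -> (forall x, closure K x -> K x) ->
  continuous3 f -> exists x, K x /\ forall y, K y -> f x <= f y.
Proof.
  intros Hne [M HM] Hclosed Hcont. apply NNPP; intro Hno.
  destruct (ClassicalEpsilon.choice _
              (improving_neighbourhood K f Hne Hclosed Hcont Hno)) as [G HG].
  destruct (ball_finite_cover M (fun x => fst (G x))) as [l Hl].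
  assert (Hcover : forall y, K y -> exists t, In t l /\ f (snd (G t)) < f y).
  { intros y Ky. destruct (Hl y (HM y Ky)) as [t [Hin Ht]].
    exists t; split; [exact Hin|]. apply (proj2 (HG t)); assumption. }
  destruct (list_argmin (fun t => f (snd (G t))) l) as [t0 [_ Hmin]].
  { destruct Hne as [y Ky]; destruct (Hcover y Ky) as [t [Ht _]].
    intro E; rewrite E in Ht; exact Ht. }
  destruct (Hcover _ (proj1 (HG t0))) as [t [Ht Hlt]].
  specialize (Hmin t Ht); simpl in Hmin; lra.
Qed.

Lemma boundary_closed (D : V3 -> Prop) (x : V3) :
  closure (boundary D) x -> boundary D x.
Proof.
  intro Hx; split.
  - intros eps He. destruct (Hx (eps / 2)) as [y [[Cy _] Hy]]; [lra|].
    destruct (Cy (eps / 2)) as [z [Dz Hz]]; [lra|].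
    exists z; split; [exact Dz|]. pose proof (dist3_triangle z y x); lra.
  - intros [r [Hr Hint]]. destruct (Hx (r / 2)) as [y [[_ Ny] Hy]]; [lra|].
    apply Ny. exists (r / 2); split; [lra|]. intros z Hz; apply Hint.
    pose proof (dist3_triangle z y x); lra.
Qed.

Lemma boundary_bounded (D : V3 -> Prop) : is_bounded D -> is_bounded (boundary D).
Proof.
  intros [M HM]. exists (M + 1). intros x [Cx _].
  destruct (Cx 1) as [y [Dy Hy]]; [lra|].
  pose proof (HM y Dy). pose proof (norm_triangle (vsub x y) y).
  replace (vadd (vsub x y) y) with x in * by v3_ring.
  rewrite dist3_sym in Hy; unfold dist3 in Hy; lra.
Qed.

(** [phi(.;y,y')] is 2-Lipschitz, hence continuous. *)
Lemma phi_continuous (y y' : V3) : continuous3 (fun x => phi x y y').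
Proof.
  intros x eps He. exists (eps / 2); split; [lra|]. intros z Hz. unfold phi.
  pose proof (norm_sub_lipschitz y z x).
  pose proof (norm_sub_lipschitz y' z x).
  rewrite (norm_sub_sym z y'), (norm_sub_sym x y').
  pose proof (Rabs_triang (norm (vsub y z) - norm (vsub y x))
                          (norm (vsub y' z) - norm (vsub y' x))).
  replace (norm (vsub y z) + norm (vsub y' z) - (norm (vsub y x) + norm (vsub y' x)))
    with (norm (vsub y z) - norm (vsub y x) + (norm (vsub y' z) - norm (vsub y' x)))
    by ring.
  lra.
Qed.

(** ** The ellipsoid [E_c(p,p')] along a ray from the focus [p'] *)

Lemma phi_ge_focal_distance (x p p' : V3) : norm (vsub p p') <= phi x p p'.
Proof. apply norm_sub_triangle. Qed.

Lemma phi_shift_lower (x p p' w : V3) (s : R) :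
  in_S2 w -> 0 <= s -> phi x p p' - s <= phi x p (vadd p' (vscale s w)).
Proof.
  intros Hw Hs. unfold phi.
  pose proof (norm_sub_triangle x (vadd p' (vscale s w)) p').
  replace (vsub (vadd p' (vscale s w)) p') with (vscale s w) in * by v3_ring.
  rewrite norm_scale_unit in *; auto; lra.
Qed.

Lemma phi_ray_shift (p p' w : V3) (A s : R) :
  in_S2 w -> 0 <= s <= A ->
  phi (vadd p' (vscale A w)) p (vadd p' (vscale s w)) =
  phi (vadd p' (vscale A w)) p p' - s.
Proof.
  intros Hw Hs. unfold phi.
  replace (vsub (vadd p' (vscale A w)) (vadd p' (vscale s w))) with (vscale (A - s) w)
    by v3_ring.
  replace (vsub (vadd p' (vscale A w)) p') with (vscale A w) by v3_ring.
  rewrite !norm_scale_unit; auto; lra.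
Qed.

Lemma phi_on_ray (p p' w : V3) (A : R) :
  in_S2 w -> 0 <= A ->
  phi (vadd p' (vscale A w)) p p' = norm (vsub (vsub p p') (vscale A w)) + A.
Proof.
  intros Hw HA. unfold phi.
  replace (vsub p (vadd p' (vscale A w))) with (vsub (vsub p p') (vscale A w)) by v3_ring.
  replace (vsub (vadd p' (vscale A w)) p') with (vscale A w) by v3_ring.
  rewrite norm_scale_unit; auto.
Qed.

(** A point [p' + A w] of the ray lies on [E_c(p,p')] only if [A] solves the
    linear equation [2 A (c - w.d) = c^2 - |d|^2] that defines [s(w)]. *)
Lemma ray_level_equation (p p' w : V3) (c A : R) :
  in_S2 w -> 0 <= A -> phi (vadd p' (vscale A w)) p p' = c ->
  A * (2 * (c - dot w (vsub p p'))) = c ^ 2 - norm (vsub p p') ^ 2.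
Proof.
  intros Hw HA Hphi. rewrite phi_on_ray in Hphi; auto.
  assert (Hn : norm (vsub (vsub p p') (vscale A w)) = c - A) by lra.
  pose proof (norm_sq (vsub (vsub p p') (vscale A w))) as Hsq.
  rewrite Hn, norm_sub_scale_unit_sq in Hsq; [|exact Hw].
  simpl; lra.
Qed.

Section RayPoint.

Variables (p p' w : V3) (c : R).
Hypothesis Hw : in_S2 w.
Hypothesis Hfoci : norm (vsub p p') <= c.
Hypothesis HS : 0 < sfun w p p' c.

Lemma sfun_denominator_pos : 0 < c - dot w (vsub p p').
Proof.
  pose proof (cauchy_schwarz w (vsub p p')) as Hcs; rewrite Hw in Hcs.
  destruct (Rle_lt_or_eq_dec 0 (c - dot w (vsub p p'))) as [H|H]; [lra|exact H|].
  exfalso. assert (Hcd : c = norm (vsub p p')) by lra.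
  unfold sfun in HS. rewrite Hcd in HS.
  replace (norm (vsub p p') ^ 2 - norm (vsub p p') ^ 2) with 0 in HS by ring.
  unfold Rdiv in HS; rewrite Rmult_0_l in HS; lra.
Qed.

Lemma sfun_equation :
  sfun w p p' c * (2 * (c - dot w (vsub p p'))) = c ^ 2 - norm (vsub p p') ^ 2.
Proof.
  pose proof sfun_denominator_pos. unfold sfun; field; lra.
Qed.

(** [s(w) <= c], because [(c - s(w)) 2 (c - w.d) = |c w - d|^2]. *)
Lemma sfun_le_c : sfun w p p' c <= c.
Proof.
  pose proof sfun_denominator_pos; pose proof sfun_equation.
  pose proof (dot_self_nonneg (vsub (vsub p p') (vscale c w))) as Hsq.
  rewrite norm_sub_scale_unit_sq in Hsq; [|exact Hw].
  simpl in *; nra.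
Qed.

Lemma ray_point_on_ellipsoid : phi (vadd p' (vscale (sfun w p p' c) w)) p p' = c.
Proof.
  pose proof sfun_equation; pose proof sfun_le_c.
  rewrite phi_on_ray; [|exact Hw|lra].
  rewrite (norm_unique _ (c - sfun w p p' c)); [ring|lra|].
  rewrite norm_sub_scale_unit_sq; [|exact Hw].
  simpl in *; lra.
Qed.

Lemma ray_point_unique (A : R) :
  0 <= A -> phi (vadd p' (vscale A w)) p p' = c -> A = sfun w p p' c.
Proof.
  intros HA Hphi. pose proof sfun_denominator_pos; pose proof sfun_equation.
  pose proof (ray_level_equation p p' w c A Hw HA Hphi).
  assert (Hz : (A - sfun w p p' c) * (2 * (c - dot w (vsub p p'))) = 0) by lra.
  apply Rmult_integral in Hz; destruct Hz; lra.
Qed.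

Lemma shifted_focus_equality (x : V3) (s : R) :
  0 < s -> c <= phi x p p' -> phi x p (vadd p' (vscale s w)) <= c - s ->
  x = vadd p' (vscale (sfun w p p' c) w).
Proof.
  intros Hs Hge Hle.
  assert (Hu : vsub x (vadd p' (vscale s w)) = vsub (vsub x p') (vscale s w)) by v3_ring.
  assert (Htri : norm (vsub (vsub x p') (vscale s w)) + s <= norm (vsub x p')).
  { unfold phi in Hge, Hle; rewrite Hu in Hle; lra. }
  assert (Hx : x = vadd p' (vscale (norm (vsub x p')) w)).
  { pose proof (triangle_equality_unit _ _ _ Hw Hs Htri) as E.
    replace x with (vadd p' (vsub x p')) at 1 by v3_ring. rewrite E at 1; reflexivity. }
  assert (Hlevel : phi x p p' = c).
  { pose proof (phi_shift_lower x p p' w s Hw (Rlt_le _ _ Hs)); lra. }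
  rewrite Hx in Hlevel.
  rewrite Hx, (ray_point_unique _ (norm_nonneg _) Hlevel); reflexivity.
Qed.

End RayPoint.

Section FocusShift.

Variables (D : V3 -> Prop) (p p' : V3) (c s : R).
Hypothesis Hc : is_min_on (boundary D) (fun x => phi x p p') c.
Hypothesis Hs : 0 < s.
(** [s] lies below [s(w)] for every direction (from [s < eta' < inf s(w)]). *)
Hypothesis Hs_sfun : forall w, in_S2 w -> s < sfun w p p' c.

Lemma foci_le_c : norm (vsub p p') <= c.
Proof.
  destruct Hc as [[q [_ <-]] _]. apply phi_ge_focal_distance.
Qed.

Lemma shifted_min_on_boundary (w : V3) :
  in_S2 w -> boundary D (vadd p' (vscale (sfun w p p' c) w)) ->
  is_min_on (boundary D) (fun x => phi x p (vadd p' (vscale s w))) (c - s).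
Proof.
  intros Hw Hb. pose proof (Hs_sfun w Hw). split.
  - exists (vadd p' (vscale (sfun w p p' c) w)); split; [exact Hb|].
    rewrite phi_ray_shift, ray_point_on_ellipsoid; auto using foci_le_c; lra.
  - intros x Bx. pose proof (phi_shift_lower x p p' w s Hw (Rlt_le _ _ Hs)).
    pose proof (proj2 Hc x Bx); simpl in *; lra.
Qed.

Lemma shifted_min_off_boundary (w : V3) :
  is_bounded D -> in_S2 w -> ~ boundary D (vadd p' (vscale (sfun w p p' c) w)) ->
  exists m, is_min_on (boundary D) (fun x => phi x p (vadd p' (vscale s w))) m /\
            c - s < m.
Proof.
  intros HD Hw Hnb. pose proof (Hs_sfun w Hw).
  destruct (continuous_attains_min (boundary D) (fun x => phi x p (vadd p' (vscale s w))))
    as [x0 [Bx0 Hx0]].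
  - destruct Hc as [[q [Bq _]] _]; exists q; exact Bq.
  - apply boundary_bounded, HD.
  - apply boundary_closed.
  - apply phi_continuous.
  - exists (phi x0 p (vadd p' (vscale s w))). split; [split; [exists x0; auto | exact Hx0]|].
    apply Rnot_le_lt; intro Hle. apply Hnb.
    rewrite <- (shifted_focus_equality p p' w c Hw foci_le_c ltac:(lra) x0 s Hs
                  (proj2 Hc x0 Bx0) Hle).
    exact Bx0.
Qed.

(** Boundary points are farther than [s] from [p'] (from [B'] lying outside
    the closure of [D]). *)
Hypothesis Hfar : forall x, closure D x -> s < dist3 x p'.

Lemma Lambda_characterisation (q : V3) :
  Lambda D p p' c q <->
  exists w, in_S2 w /\ q = vadd p' (vscale (sfun w p p' c) w) /\
    is_min_on (boundary D) (fun x => phi x p (vadd p' (vscale s w))) (c - s).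
Proof.
  split.
  - intros [Bq Eq]. pose proof (Hfar q (proj1 Bq)) as Ht.
    destruct (ray_decomposition q p') as [w [Hw Hq]].
    { intros ->. unfold dist3 in Ht. rewrite (norm_unique _ 0) in Ht; [lra|lra|].
      unfold dot; simpl; ring. }
    pose proof (Hs_sfun w Hw).
    assert (Hshift : phi q p (vadd p' (vscale s w)) = c - s).
    { rewrite Hq, phi_ray_shift, <- Hq; [lra|exact Hw|lra]. }
    assert (HqS := shifted_focus_equality p p' w c Hw foci_le_c ltac:(lra) q s Hs
                     (Req_le _ _ (eq_sym Eq)) (Req_le _ _ Hshift)).
    exists w; split; [exact Hw|]; split; [exact HqS|].
    apply shifted_min_on_boundary; [exact Hw|]; rewrite <- HqS; exact Bq.
  - intros [w [Hw [-> [[x [Bx Ex]] _]]]]. pose proof (Hs_sfun w Hw).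
    assert (Hx := shifted_focus_equality p p' w c Hw foci_le_c ltac:(lra) x s Hs
                    (proj2 Hc x Bx) (Req_le _ _ Ex)).
    split; [rewrite <- Hx; exact Bx|].
    apply ray_point_on_ellipsoid; auto using foci_le_c; lra.
Qed.

End FocusShift.

Theorem proposition5p1
  (D : V3 -> Prop) (p p' : V3) (c eta' s : R)
  (HDne : exists x, D x) (HDopen : is_open D) (HDbdd : is_bounded D)
  (HDC2 : C2_boundary D)
  (Hp : ~ closure D p) (Hp' : ~ closure D p')
  (Hseg : forall t, 0 <= t <= 1 -> ~ closure D (vadd p (vscale t (vsub p' p))))
  (HB' : forall x, dist3 x p' <= eta' -> ~ closure D x)
  (Hc : is_min_on (boundary D) (fun x => phi x p p') c)
  (Heta'pos : 0 < eta')
  (Heta'inf : exists m, is_inf_on in_S2 (fun w => sfun w p p' c) m /\ eta' < m)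
  (Hs : 0 < s < eta') :
  (forall w, in_S2 w ->
     boundary D (vadd p' (vscale (sfun w p p' c) w)) ->
     is_min_on (boundary D) (fun x => phi x p (vadd p' (vscale s w))) (c - s)) /\
  (forall w, in_S2 w ->
     ~ boundary D (vadd p' (vscale (sfun w p p' c) w)) ->
     exists m, is_min_on (boundary D) (fun x => phi x p (vadd p' (vscale s w))) m
               /\ c - s < m) /\
  (forall q, Lambda D p p' c q <->
     exists w, in_S2 w /\ q = vadd p' (vscale (sfun w p p' c) w) /\
       is_min_on (boundary D) (fun x => phi x p (vadd p' (vscale s w))) (c - s)).
Proof.
  assert (Hs_sfun : forall w, in_S2 w -> s < sfun w p p' c).
  { intros w Hw. destruct Heta'inf as [m [[Hinf _] Hm]].
    specialize (Hinf w Hw); simpl in Hinf; lra. }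
  assert (Hfar : forall x, closure D x -> s < dist3 x p').
  { intros x Hx. destruct (Rle_or_lt (dist3 x p') eta') as [Hle|Hlt];
      [exfalso; exact (HB' x Hle Hx) | lra]. }
  split; [|split].
  - intros w. apply shifted_min_on_boundary; tauto.
  - intros w. apply shifted_min_off_boundary; tauto.
  - intros q. apply Lambda_characterisation; tauto.
Qed.
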